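(* Consider the Axelrod model with $F$ features and $q\ge2$ states on the path with vertex set $\{0,1,\dots,N\}$, started with all initial features i.i.d. uniform on $\{1,\dots,q\}$, and fix a time $t\ge0$. Let $0\le x<y<z\le N$ and $i\in\{1,\dots,F\}$, and for vertices $u,v$ let $\Omega_i(u,v)=\{X_t^i(u)=X_t^i(v)\}$. Then $$P\big(\Omega_i(x,z)\ \big|\ (\Omega_i(x,y)\cup\Omega_i(y,z))^c\big)=\frac{1}{q-1}.$$
   Context: Axelrod model with $F$ features and $q$ states on a graph: process $X_t:V\to\{1,\dots,q\}^F$, $X_t(x)=(X_t^1(x),\dots,X_t^F(x))$; for each ordered pair $(x,y)$ of adjacent vertices with $X(x)\ne X(y)$, at rate $F(x,y)/2$, where $F(x,y)=\frac1F\sum_i\mathbf 1\{X^i(x)=X^i(y)\}$, vertex $x$ copies from $y$ one feature chosen uniformly among those on which they differ. *)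

From mathcomp Require Import all_boot.
From Stdlib Require Import Reals.
Set Implicit Arguments. Unset Strict Implicit. Unset Printing Implicit Defensive.

Definition Rsum (T : finType) (f : T -> R) : R := \big[Rplus/0%R]_(s : T) f s.

Section Axelrod.
Variables (F q N : nat).

(* Vertices of the path {0,...,N}; features 'I_F; states 'I_q
   (state k+1 of the paper is encoded as k : 'I_q). *)
Definition vertex := 'I_N.+1.
Definition feature := 'I_F.
Definition config := {ffun vertex * feature -> 'I_q}.

Definition adj (x y : vertex) : bool := (x.+1 == y :> nat) || (y.+1 == x :> nat).

Definition nagree (s : config) (x y : vertex) : nat :=
  #|[pred j : feature | s (x, j) == s (y, j)]|.
Definition ndiff (s : config) (x y : vertex) : nat :=
  #|[pred j : feature | s (x, j) != s (y, j)]|.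

Definition upd (s : config) (x : vertex) (j : feature) (v : 'I_q) : config :=
  [ffun p => if (p.1 == x) && (p.2 == j) then v else s p].

(* Jump rate from s to s': for each ordered adjacent pair (x,y), at rate
   F(x,y)/2 (F(x,y) = nagree/F), x copies from y a uniformly chosen
   differing feature. *)
Definition rate (s s' : config) : R :=
  Rsum (fun xy : vertex * vertex =>
    if adj xy.1 xy.2 then
      Rsum (fun j : feature =>
        if (s (xy.1, j) != s (xy.2, j)) && (s' == upd s xy.1 j (s (xy.2, j)))
        then (INR (nagree s xy.1 xy.2) / INR F / 2 / INR (ndiff s xy.1 xy.2))%R
        else 0%R)
    else 0%R).

Definition gen (s s' : config) : R :=
  if s == s' then (- Rsum (fun r : config => if r == s then 0%R else rate s r))%R
  else rate s s'.

(* p s c = P(X_s = c): the law of the chain, characterized by the initial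
   i.i.d. uniform law and the Kolmogorov forward equation. *)
Definition is_law (p : R -> config -> R) : Prop :=
  (forall c, p 0%R c = (/ (INR q ^ (F * N.+1)))%R) /\
  (forall (s : R) (c : config),
      derivable_pt_lim (fun u => p u c) s (Rsum (fun r => p s r * gen r c))%R).

Definition prob (p : R -> config -> R) (t : R) (A : pred config) : R :=
  Rsum (fun c => if A c then p t c else 0%R).

Definition cond_prob (p : R -> config -> R) (t : R) (A B : pred config) : R :=
  (prob p t (predI A B) / prob p t B)%R.

Definition Omega (i : feature) (u v : vertex) : pred config :=
  fun c => c (u, i) == c (v, i).

End Axelrod.

From mathcomp Require Import all_boot all_fingroup.
From Stdlib Require Import Reals Lra Lia.
From HB Require Import structures.
Set Implicit Arguments. Unset Strict Implicit. Unset Printing Implicit Defensive.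
Set Warnings "-notation-overridden,-redundant-canonical-projection".

(* Call two configurations alike when they agree off feature [i] and their
   [i]-th features agree along exactly the same edges. For every union [P] of
   alike-classes the total rate from [P] into [c] depends only on the class of
   [c]: a move copying another feature is matched by the same move, a move copying
   feature [i] along an agreeing edge by that move relabelled through a permutation
   of the states on the copying vertex and its (at most two) neighbours. The
   initial law is uniform, so a Gronwall estimate on the sum over alike pairs of
   [(p c - p c')^2] keeps the law constant on classes.
   If [x], [y], [z] carry pairwise distinct [i]-states, swapping [c (x, i)] with a
   state [d] on all vertices beyond [y] stays in the class, and matches
   [{c (z, i) = d}] with [{c (z, i) = c (x, i), c (y, i) <> d}]; summing over [d]
   gives [q - 1] times the probability of [{c (z, i) = c (x, i)}]. *)

HB.instance Definition _ := Monoid.isComLaw.Build R 0%R Rplus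
  (fun a b c => esym (Rplus_assoc a b c)) Rplus_comm Rplus_0_l.

Open Scope R_scope.

Section Rsum.
Variable T : finType.
Implicit Types f g : T -> R.

Lemma Rsum_ext f g : (forall s, f s = g s) -> Rsum f = Rsum g.
Proof. by move=> fg; apply: eq_bigr => s _. Qed.

Lemma Rsum0 : Rsum (fun _ : T => 0) = 0.
Proof. by rewrite /Rsum big1. Qed.

Lemma Rsum_add f g : Rsum (fun s => f s + g s) = Rsum f + Rsum g.
Proof. exact: big_split. Qed.

Lemma Rsum_scal a f : Rsum (fun s => a * f s) = a * Rsum f.
Proof.
rewrite /Rsum; elim: (index_enum T) => [|h l IH]; rewrite ?big_nil ?big_cons; first ring.
by rewrite IH; ring.
Qed.

Lemma Rsum_sub f g : Rsum (fun s => f s - g s) = Rsum f - Rsum g.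
Proof.
rewrite -(Rsum_ext (f := fun s => f s + (-1) * g s)); last by move=> s; ring.
by rewrite Rsum_add Rsum_scal; ring.
Qed.

Lemma Rsum_const a : Rsum (fun _ : T => a) = INR #|T| * a.
Proof.
rewrite /Rsum big_const; elim: #|_| => [|n IH] /=; first ring.
by rewrite IH; case: n {IH} => [|n] /=; ring.
Qed.

Lemma Rsum_le f g : (forall s, f s <= g s) -> Rsum f <= Rsum g.
Proof.
move=> fg; rewrite /Rsum; elim: (index_enum T) => [|h l IH]; rewrite ?big_nil ?big_cons.
  exact: Rle_refl.
exact: Rplus_le_compat.
Qed.

Lemma Rsum_ge0 f : (forall s, 0 <= f s) -> 0 <= Rsum f.
Proof. by move=> f_ge0; rewrite -Rsum0; apply: Rsum_le. Qed.

Lemma Rsum_D1 f s0 : Rsum f = f s0 + Rsum (fun s => if s == s0 then 0 else f s).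
Proof.
rewrite /Rsum (bigD1 s0) //= [in RHS](bigD1 s0) //= eqxx Rplus_0_l.
by congr (_ + _); apply: eq_bigr => s /negbTE ->.
Qed.

Lemma Rsum_term_le f s0 : (forall s, 0 <= f s) -> f s0 <= Rsum f.
Proof.
move=> f_ge0; rewrite (Rsum_D1 f s0).
suff : 0 <= Rsum (fun s => if s == s0 then 0 else f s) by lra.
by apply: Rsum_ge0 => s; case: (s == s0); [exact: Rle_refl|].
Qed.

Lemma Rsum_pred1 f s0 : Rsum (fun s => if s == s0 then f s else 0) = f s0.
Proof.
rewrite (Rsum_D1 _ s0) eqxx (Rsum_ext (g := fun _ => 0)) ?Rsum0 ?Rplus_0_r //.
by move=> s; case: (s == s0).
Qed.

Lemma Rsum_reindex (h : T -> T) f : injective h -> Rsum f = Rsum (fun s => f (h s)).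
Proof. by move=> h_inj; rewrite /Rsum (reindex_inj h_inj). Qed.

Lemma derivable_pt_lim_Rsum (f : T -> R -> R) (f' : T -> R) s :
  (forall c, derivable_pt_lim (f c) s (f' c)) ->
  derivable_pt_lim (fun u => Rsum (fun c => f c u)) s (Rsum f').
Proof.
move=> df; rewrite /Rsum; elim: (index_enum T) => [|h l IH].
  have -> : (fun u => \big[Rplus/0]_(c <- [::]) f c u) = fun _ => 0.
    by apply: FunctionalExtensionality.functional_extensionality => u; rewrite big_nil.
  rewrite big_nil; exact: derivable_pt_lim_const.
have -> : (fun u => \big[Rplus/0]_(c <- h :: l) f c u) =
          (fun u => f h u + \big[Rplus/0]_(c <- l) f c u).
  by apply: FunctionalExtensionality.functional_extensionality => u; rewrite big_cons.
rewrite big_cons; exact: derivable_pt_lim_plus.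
Qed.

End Rsum.

Lemma Rsum_swap (T U : finType) (f : T -> U -> R) :
  Rsum (fun a => Rsum (fun b => f a b)) = Rsum (fun b => Rsum (fun a => f a b)).
Proof. exact: exchange_big. Qed.

Lemma Rsum_if (T : finType) (b : bool) (f : T -> R) :
  Rsum (fun r => if b then f r else 0) = if b then Rsum f else 0.
Proof. by case: b; rewrite ?Rsum0. Qed.

Lemma Rle_0_sq a : 0 <= a * a.
Proof. exact: Rle_0_sqr. Qed.

Lemma Rinv_INR_ge0 n : 0 <= / INR n.
Proof.
case: n => [|n]; first by rewrite Rinv_0; apply: Rle_refl.
by apply/Rlt_le/Rinv_0_lt_compat/lt_0_INR; lia.
Qed.

Lemma le_from0_of_deriv_ge0 (f f' : R -> R) t :
  (forall s, derivable_pt_lim f s (f' s)) -> (forall s, 0 <= s -> 0 <= f' s) ->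
  0 <= t -> f 0 <= f t.
Proof.
move=> df f'_ge0 t_ge0; case: (Req_dec t 0) => [->|t_neq0]; first exact: Rle_refl.
have [c [mvt c_bd]] : exists c, f t - f 0 = f' c * (t - 0) /\ 0 < c < t.
  by apply: MVT_cor2 => [|s _]; [lra|exact: df].
have := f'_ge0 c ltac:(lra); nra.
Qed.

Lemma gronwall_zero (E E' : R -> R) (C t : R) :
  (forall s, derivable_pt_lim E s (E' s)) -> (forall s, 0 <= s -> E' s <= C * E s) ->
  E 0 = 0 -> (forall s, 0 <= s -> 0 <= E s) -> 0 <= t -> E t = 0.
Proof.
move=> dE E'_le E0 E_ge0 t_ge0.
pose g s := - (E s * exp (- (C * s))).
pose g' s := - (E' s * exp (- (C * s)) + E s * (exp (- (C * s)) * - (C * 1))).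
have dg s : derivable_pt_lim g s (g' s).
  apply: derivable_pt_lim_opp; apply: derivable_pt_lim_mult; first exact: dE.
  apply: (derivable_pt_lim_comp (fun s => - (C * s)) exp); last exact: derivable_pt_lim_exp.
  by apply: derivable_pt_lim_opp; apply: derivable_pt_lim_scal; exact: derivable_pt_lim_id.
have g'_ge0 s : 0 <= s -> 0 <= g' s.
  move=> s_ge0; have := E'_le s s_ge0; have := exp_pos (- (C * s)); rewrite /g'; nra.
have := le_from0_of_deriv_ge0 dg g'_ge0 t_ge0; rewrite /g E0.
have := exp_pos (- (C * t)); have := E_ge0 t t_ge0; nra.
Qed.

Lemma derivable_pt_lim_negpart_sq x :
  derivable_pt_lim (fun u => Rmin u 0 * Rmin u 0) x (2 * Rmin x 0).
Proof.
move=> eps eps_gt0; exists (mkposreal _ eps_gt0) => h h_neq0 /= h_lt.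
have quad_err : Rabs (Rmin (x + h) 0 * Rmin (x + h) 0 - Rmin x 0 * Rmin x 0
                      - 2 * Rmin x 0 * h) <= h * h.
  rewrite /Rmin; case: (Rle_dec (x + h) 0) => [Ha|/Rnot_le_lt Ha];
  case: (Rle_dec x 0) => [Hb|/Rnot_le_lt Hb]; apply: Rabs_le; split; nra.
have -> : (Rmin (x + h) 0 * Rmin (x + h) 0 - Rmin x 0 * Rmin x 0) / h - 2 * Rmin x 0 =
          (Rmin (x + h) 0 * Rmin (x + h) 0 - Rmin x 0 * Rmin x 0 - 2 * Rmin x 0 * h) / h
  by field.
have habs_gt0 : 0 < Rabs h by apply: Rabs_pos_lt.
rewrite /Rdiv Rabs_mult Rabs_inv; apply: (Rle_lt_trans _ (Rabs h)) => //.
apply: (Rmult_le_reg_r (Rabs h)) => //; rewrite Rmult_assoc Rinv_l ?Rmult_1_r; last lra.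
rewrite -Rabs_mult (Rabs_right (h * h)); [exact: quad_err|nra].
Qed.

Lemma cross_term_le a b g : 2 * a * (b * g) <= Rabs g * (a * a + b * b).
Proof.
have ab_le : Rabs (2 * a * b) <= a * a + b * b.
  have := Rle_0_sq (a - b); have := Rle_0_sq (a + b).
  by move=> *; apply: Rabs_le; split; nra.
rewrite -Rmult_assoc; apply: Rle_trans (Rle_abs _) _.
by rewrite Rabs_mult Rmult_comm; apply: Rmult_le_compat_l => //; apply: Rabs_pos.
Qed.

Section ForwardEquation.
Variables (T : finType) (Q : T -> T -> R) (p : R -> T -> R).
Hypothesis Q_ge0 : forall r c, r != c -> 0 <= Q r c.
Hypothesis p_deriv :
  forall s c, derivable_pt_lim (fun u => p u c) s (Rsum (fun r => p s r * Q r c)).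
Hypothesis p0_gt0 : forall c, 0 < p 0 c.

Let dp s c := Rsum (fun r => p s r * Q r c).
Let K := Rsum (fun r => Rsum (fun c => Rabs (Q r c))).
Let n := INR #|T|.

Lemma Rabs_Q_le r c : Rabs (Q r c) <= K.
Proof.
apply: (Rle_trans _ (Rsum (fun c0 => Rabs (Q r c0)))).
  by apply: (Rsum_term_le (f := fun c0 => Rabs (Q r c0)) c) => c0; apply: Rabs_pos.
apply: (Rsum_term_le (f := fun r0 => Rsum (fun c0 => Rabs (Q r0 c0))) r) => r0.
by apply: Rsum_ge0 => c0; apply: Rabs_pos.
Qed.

Let K_ge0 : 0 <= K.
Proof. by apply: Rsum_ge0 => r; apply: Rsum_ge0 => c; apply: Rabs_pos. Qed.

(* A summand of the derivative of [sum_c (Rmin (p c) 0)^2]. Off the diagonal the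
   rate [g] is nonnegative, so [pr] may be lowered to [Rmin pr 0] before AM-GM. *)
Lemma negpart_term_le (pc pr g : R) (diag : bool) :
  (~~ diag -> 0 <= g) -> (diag -> pr = pc) ->
  2 * Rmin pc 0 * (pr * g) <= Rabs g * (Rmin pc 0 * Rmin pc 0 + Rmin pr 0 * Rmin pr 0).
Proof.
case: diag => [_ /(_ isT) ->|/(_ isT) g_ge0 _].
  have := Rle_abs g; have := Rle_0_sq pc.
  by rewrite /Rmin; case: (Rle_dec pc 0) => [Hc|/Rnot_le_lt Hc]; nra.
rewrite Rabs_right; last lra.
have -> : 2 * Rmin pc 0 * (pr * g) = g * (2 * Rmin pc 0 * pr) by ring.
apply: Rmult_le_compat_l => //; have := Rle_0_sq (pc - pr).
rewrite /Rmin; case: (Rle_dec pc 0) => [Hc|/Rnot_le_lt Hc];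
  case: (Rle_dec pr 0) => [Hr|/Rnot_le_lt Hr]; nra.
Qed.

Lemma forward_ge0 t c : 0 <= t -> 0 <= p t c.
Proof.
move=> t_ge0.
pose E s := Rsum (fun c => Rmin (p s c) 0 * Rmin (p s c) 0).
pose E' s := Rsum (fun c => 2 * Rmin (p s c) 0 * dp s c).
have dE s : derivable_pt_lim E s (E' s).
  apply: derivable_pt_lim_Rsum => c0.
  have := derivable_pt_lim_comp _ _ _ _ _ (p_deriv s c0) (derivable_pt_lim_negpart_sq (p s c0)).
  by rewrite Rmult_comm.
have E_term_le s c0 : Rmin (p s c0) 0 * Rmin (p s c0) 0 <= E s.
  by apply: (Rsum_term_le (f := fun c => Rmin (p s c) 0 * Rmin (p s c) 0) c0) => c1; apply: Rle_0_sq.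
have E'_le s : 0 <= s -> E' s <= 2 * K * n * n * E s.
  move=> _; apply: (Rle_trans _ (Rsum (fun c0 => Rsum (fun r => K * (2 * E s))))).
    apply: Rsum_le => c0; rewrite /dp -Rsum_scal; apply: Rsum_le => r.
    apply: Rle_trans (negpart_term_le (diag := r == c0) _ _) _.
    - by move=> r_neq_c0; apply: Q_ge0.
    - by move/eqP ->.
    have := E_term_le s c0; have := E_term_le s r.
    have := Rle_0_sq (Rmin (p s c0) 0); have := Rle_0_sq (Rmin (p s r) 0).
    have := Rabs_Q_le r c0; have := Rabs_pos (Q r c0); nra.
  by rewrite !Rsum_const -/n; apply: Req_le; ring.
have E0 : E 0 = 0.
  rewrite /E (Rsum_ext (g := fun _ => 0)) ?Rsum0 // => c0.
  by rewrite Rmin_right; [ring|have := p0_gt0 c0; lra].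
have E_ge0 s : 0 <= s -> 0 <= E s by move=> _; apply: Rsum_ge0 => c0; apply: Rle_0_sq.
have := E_term_le t c; rewrite (gronwall_zero dE E'_le E0 E_ge0 t_ge0).
by rewrite /Rmin; case: (Rle_dec (p t c) 0) => [Hc|/Rnot_le_lt Hc]; nra.
Qed.

(* [p s c * exp (- Q c c * s)] is nondecreasing: its derivative is the inflow
   [sum_(r <> c) p s r * Q r c] times a positive factor. *)
Lemma forward_gt0 t c : 0 <= t -> 0 < p t c.
Proof.
move=> t_ge0; pose lam := - Q c c.
pose f s := p s c * exp (lam * s).
pose f' s := dp s c * exp (lam * s) + p s c * (exp (lam * s) * (lam * 1)).
have df s : derivable_pt_lim f s (f' s).
  apply: derivable_pt_lim_mult; first exact: p_deriv.
  apply: (derivable_pt_lim_comp (fun s => lam * s) exp); last exact: derivable_pt_lim_exp.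
  by apply: derivable_pt_lim_scal; exact: derivable_pt_lim_id.
have f'_ge0 s : 0 <= s -> 0 <= f' s.
  move=> s_ge0; have inflow_ge0 : 0 <= dp s c + lam * p s c.
    rewrite /dp (Rsum_D1 _ c) /lam.
    suff : 0 <= Rsum (fun r => if r == c then 0 else p s r * Q r c) by lra.
    apply: Rsum_ge0 => r; case: eqP => [_|/eqP r_neq_c]; first exact: Rle_refl.
    by apply: Rmult_le_pos; [exact: forward_ge0|exact: Q_ge0].
  have := exp_pos (lam * s); rewrite /f'; nra.
have := le_from0_of_deriv_ge0 df f'_ge0 t_ge0; rewrite /f Rmult_0_r exp_0 Rmult_1_r.
have := p0_gt0 c; have := exp_pos (lam * t); have := forward_ge0 c t_ge0; nra.
Qed.

Section Lumping.
Variable e : rel T.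
Hypotheses (e_refl : reflexive e) (e_sym : symmetric e) (e_trans : transitive e).
Hypothesis Q_lumpable : forall (P : pred T) c c', (forall r r', e r r' -> P r = P r') ->
  e c c' -> Rsum (fun r => if P r then Q r c else 0) = Rsum (fun r => if P r then Q r c' else 0).
Hypothesis p0_lumped : forall c c', e c c' -> p 0 c = p 0 c'.

Definition class_repr (r : T) : T := odflt r [pick r' | e r r'].

Lemma class_repr_rel r : e r (class_repr r).
Proof. by rewrite /class_repr; case: pickP => [//|/(_ r)]; rewrite e_refl. Qed.

Lemma class_repr_eq r r' : e r r' -> class_repr r = class_repr r'.
Proof.
move=> err'; rewrite /class_repr (@eq_pick _ _ (e r')) => [|r0 /=].
  by case: pickP => [//|/(_ r')]; rewrite e_refl.
by apply/idP/idP; apply: e_trans; rewrite // e_sym.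
Qed.

(* Lumpability kills the flow out of class representatives, so the derivatives at
   related states differ only through the spread of [p] within classes. *)
Lemma dp_sub_lumped s c c' : e c c' ->
  dp s c - dp s c' = Rsum (fun r => (p s r - p s (class_repr r)) * (Q r c - Q r c')).
Proof.
move=> ecc'.
have repr_flow0 : Rsum (fun r => p s (class_repr r) * (Q r c - Q r c')) = 0.
  rewrite (Rsum_ext (g := fun r => Rsum (fun r0 =>
             if r0 == class_repr r then p s r0 * (Q r c - Q r c') else 0))); last first.
    by move=> r; rewrite (Rsum_pred1 (fun r0 => p s r0 * (Q r c - Q r c'))).
  rewrite Rsum_swap -[RHS](Rsum0 T); apply: Rsum_ext => r0.
  have class_flow := @Q_lumpable (fun r => r0 == class_repr r) c c'.
  rewrite (Rsum_ext (g := fun r => p s r0 * ((if r0 == class_repr r then Q r c else 0)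
                                        - (if r0 == class_repr r then Q r c' else 0)))).
    rewrite Rsum_scal Rsum_sub class_flow //; last by move=> r r' /class_repr_eq ->.
    by rewrite Rminus_diag Rmult_0_r.
  by move=> r; case: (r0 == class_repr r); ring.
rewrite /dp -Rsum_sub -[LHS]Rminus_0_r -repr_flow0 -Rsum_sub.
by apply: Rsum_ext => r; ring.
Qed.

Lemma dp_cross_lumped_le s c1 c2 (M : R) :
  (forall a b, e a b -> (p s a - p s b) * (p s a - p s b) <= M) -> e c1 c2 ->
  2 * (p s c1 - p s c2) * (dp s c1 - dp s c2) <= n * (4 * K * M).
Proof.
move=> sq_le e12; rewrite -Rsum_const (dp_sub_lumped s e12) -Rsum_scal; apply: Rsum_le => r.
have := sq_le _ _ (class_repr_rel r); have := sq_le _ _ e12.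
have := Rabs_Q_le r c1; have := Rabs_Q_le r c2.
have := Rabs_triang (Q r c1) (- Q r c2); rewrite Rabs_Ropp -/(Rminus _ _).
move=> Qdiff_le Q2_le Q1_le b_le a_le.
apply: Rle_trans (cross_term_le _ _ _) _.
have -> : 4 * K * M = 2 * K * (M + M) by ring.
apply: Rmult_le_compat; [exact: Rabs_pos| |lra|lra].
by apply: Rplus_le_le_0_compat; apply: Rle_0_sq.
Qed.

Lemma forward_lumped t c c' : 0 <= t -> e c c' -> p t c = p t c'.
Proof.
move=> t_ge0 ecc'.
pose sq s c c' := if e c c' then (p s c - p s c') * (p s c - p s c') else 0.
pose U s := Rsum (fun c => Rsum (fun c' => sq s c c')).
pose U' s := Rsum (fun c => Rsum (fun c' => if e c c' then
   (dp s c - dp s c') * (p s c - p s c') + (p s c - p s c') * (dp s c - dp s c') else 0)).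
have dU s : derivable_pt_lim U s (U' s).
  apply: derivable_pt_lim_Rsum => c1; apply: derivable_pt_lim_Rsum => c2.
  rewrite /sq; case: (e c1 c2); last exact: derivable_pt_lim_const.
  have d12 := derivable_pt_lim_minus _ _ s _ _ (p_deriv s c1) (p_deriv s c2).
  by apply: derivable_pt_lim_mult; exact: d12.
have sq_ge0 s c1 c2 : 0 <= sq s c1 c2.
  by rewrite /sq; case: ifP => _; [exact: Rle_0_sq|exact: Rle_refl].
have sq_le_U s c1 c2 : e c1 c2 -> (p s c1 - p s c2) * (p s c1 - p s c2) <= U s.
  move=> e12; apply: (Rle_trans _ (Rsum (fun c' => sq s c1 c'))).
    by have := Rsum_term_le (f := fun c' => sq s c1 c') c2 (sq_ge0 s c1); rewrite /sq e12.
  by apply: (Rsum_term_le (f := fun c => Rsum (fun c' => sq s c c')) c1) => c3; apply: Rsum_ge0.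
have U_ge0 s : 0 <= s -> 0 <= U s by move=> _; do 2!apply: Rsum_ge0 => ?.
have U'_le s : 0 <= s -> U' s <= 4 * K * n * n * n * U s.
  move=> s_ge0; apply: (Rle_trans _ (Rsum (fun c1 => Rsum (fun c2 => n * (4 * K * U s))))).
    apply: Rsum_le => c1; apply: Rsum_le => c2.
    case: (boolP (e c1 c2)) => e12; last first.
      have := U_ge0 s s_ge0; have := K_ge0; have := pos_INR #|T|; rewrite -/n.
      by move=> *; apply: Rmult_le_pos => //; apply: Rmult_le_pos => //; lra.
    have -> : (dp s c1 - dp s c2) * (p s c1 - p s c2) + (p s c1 - p s c2) * (dp s c1 - dp s c2)
      = 2 * (p s c1 - p s c2) * (dp s c1 - dp s c2) by ring.
    exact: dp_cross_lumped_le (sq_le_U s) e12.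
  by rewrite !Rsum_const -/n; apply: Req_le; ring.
have U0 : U 0 = 0.
  rewrite /U (Rsum_ext (g := fun _ => 0)) ?Rsum0 // => c1.
  rewrite (Rsum_ext (g := fun _ => 0)) ?Rsum0 // => c2.
  by rewrite /sq; case: ifP => [/p0_lumped e12|_]; rewrite ?e12; ring.
have := sq_le_U t _ _ ecc'; rewrite (gronwall_zero dU U'_le U0 U_ge0 t_ge0); nra.
Qed.

End Lumping.
End ForwardEquation.

Lemma perm_of_same_pattern (T U : finType) (s : seq U) (f g : U -> T) :
  {in s &, forall n m, (f n == f m) = (g n == g m)} ->
  exists sg : {perm T}, {in s, forall n, sg (f n) = g n}.
Proof.
elim: s => [|a s IH] fg; first by exists 1%g.
have [sg sgE] : exists sg : {perm T}, {in s, forall n, sg (f n) = g n}.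
  by apply: IH => n m sn sm; apply: fg; rewrite inE ?sn ?sm orbT.
exists (sg * tperm (sg (f a)) (g a))%g => n; rewrite inE => /orP [/eqP ->|sn].
  by rewrite permM tpermL.
rewrite permM (sgE n sn).
have fg_na : (f n == f a) = (g n == g a) by apply: fg; rewrite !inE ?eqxx ?sn ?orbT.
case: (eqVneq (g n) (g a)) => [gna|gna].
  by move: fg_na; rewrite gna eqxx => /eqP <-; rewrite (sgE n sn) gna tperm1 perm1.
apply: tpermD; last by rewrite eq_sym.
apply: contra_neq gna => sg_fa; apply/eqP; rewrite -fg_na; apply/eqP/(@perm_inj _ sg).
by rewrite sg_fa (sgE n sn).
Qed.

Section AxelrodGenerator.
Variables (F q N : nat) (i : feature F).
Local Notation config := (config F q N).
Local Notation vertex := (vertex N).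
Implicit Types (c r s : config) (x y a b : vertex) (j : feature F) (v w : 'I_q).

Lemma updE s x j v (a : vertex) (k : feature F) :
  upd s x j v (a, k) = if (a == x) && (k == j) then v else s (a, k).
Proof. by rewrite ffunE. Qed.

Lemma upd_at s x j v : upd s x j v (x, j) = v.
Proof. by rewrite updE !eqxx. Qed.

Lemma upd_upd s x j v w : upd (upd s x j v) x j w = upd s x j w.
Proof. by apply/ffunP => [[a k]]; rewrite !updE; case: (_ && _). Qed.

Lemma upd_id s x j : upd s x j (s (x, j)) = s.
Proof. by apply/ffunP => [[a k]]; rewrite updE; case: andP => // [[/eqP -> /eqP ->]]. Qed.

Lemma eq_upd_self s x j v : (s == upd s x j v) = (s (x, j) == v).
Proof.
apply/eqP/eqP => [sE|<-]; last by rewrite upd_id.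
by rewrite {1}sE upd_at.
Qed.

Lemma adj_sym a b : adj a b = adj b a.
Proof. by rewrite /adj orbC. Qed.

Lemma adj_neq a b : adj a b -> a != b.
Proof. by rewrite /adj => /orP [] /eqP ab; apply/eqP => E; rewrite E in ab; lia. Qed.

Lemma adj_two_neighbours x n m a :
  adj x n -> adj x m -> adj x a -> n != m -> (a == n) || (a == m).
Proof.
move=> + + + /eqP nm; rewrite /adj.
have {}nm : nat_of_ord n <> nat_of_ord m by move/val_inj.
move=> /orP[/eqP ?|/eqP ?] /orP[/eqP ?|/eqP ?] /orP[/eqP ?|/eqP ?].
all: first [ (apply/orP; left; apply/eqP; apply: val_inj => /=; lia)
           | (apply/orP; right; apply/eqP; apply: val_inj => /=; lia) | (exfalso; lia) ].
Qed.

Definition alike c c' : bool :=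
  [forall pr : vertex * feature F, (pr.2 != i) ==> (c pr == c' pr)] &&
  [forall a, forall b, adj a b ==> ((c (a, i) == c (b, i)) == (c' (a, i) == c' (b, i)))].

Lemma alikeP c c' :
  reflect ((forall a k, k != i -> c (a, k) = c' (a, k)) /\
           (forall a b, adj a b -> (c (a, i) == c (b, i)) = (c' (a, i) == c' (b, i))))
          (alike c c').
Proof.
apply: (iffP andP) => [[/forallP off /forallP on]|[off on]]; split.
- by move=> a k ki; have := off (a, k); rewrite /= ki => /eqP.
- by move=> a b ab; have /forallP/(_ b) := on a; rewrite ab => /eqP.
- by apply/forallP => [[a k]]; apply/implyP => /= ki; rewrite off.
- by apply/forallP => a; apply/forallP => b; apply/implyP => ab; rewrite on.
Qed.

Lemma alike_refl : reflexive alike.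
Proof. by move=> c; apply/alikeP. Qed.

Lemma alike_sym : symmetric alike.
Proof.
suff alike_sym_imp c c' : alike c c' -> alike c' c by move=> c c'; apply/idP/idP; apply: alike_sym_imp.
by move/alikeP => [off on]; apply/alikeP; split => *; rewrite (off, on).
Qed.

Lemma alike_trans : transitive alike.
Proof.
move=> c2 c1 c3 /alikeP [off12 on12] /alikeP [off23 on23].
by apply/alikeP; split => *; rewrite (off12, on12) ?(off23, on23).
Qed.

Lemma alike_agree c c' a b j : alike c c' -> adj a b ->
  (c (a, j) == c (b, j)) = (c' (a, j) == c' (b, j)).
Proof.
move=> /alikeP [off on] ab; case: (eqVneq j i) => [->|ji]; first exact: on.
by rewrite !off.
Qed.

Lemma alike_nagree c c' a b : alike c c' -> adj a b -> nagree c a b = nagree c' a b.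
Proof. by move=> cc' ab; apply: eq_card => j /=; apply: alike_agree. Qed.

Lemma alike_ndiff c c' a b : alike c c' -> adj a b -> ndiff c a b = ndiff c' a b.
Proof. by move=> cc' ab; apply: eq_card => j; rewrite !inE (alike_agree j cc' ab). Qed.

Definition copy_rate s x y : R := INR (nagree s x y) / INR F / 2 / INR (ndiff s x y).

Lemma copy_rate_ge0 s x y : 0 <= copy_rate s x y.
Proof.
rewrite /copy_rate /Rdiv.
repeat apply: Rmult_le_pos; try exact: Rinv_INR_ge0; first exact: pos_INR.
lra.
Qed.

Lemma rateE s s' : rate s s' =
  Rsum (fun xy : vertex * vertex => if adj xy.1 xy.2 then
     Rsum (fun j => if (s (xy.1, j) != s (xy.2, j)) && (s' == upd s xy.1 j (s (xy.2, j)))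
        then copy_rate s xy.1 xy.2 else 0) else 0).
Proof. by []. Qed.

Lemma rate_ge0 s s' : 0 <= rate s s'.
Proof.
apply: Rsum_ge0 => xy; case: ifP => _; last exact: Rle_refl.
by apply: Rsum_ge0 => j; case: ifP => _; [exact: copy_rate_ge0|exact: Rle_refl].
Qed.

Lemma gen_ge0 r c : r != c -> 0 <= gen r c.
Proof. by move=> /negbTE rc; rewrite /gen rc; exact: rate_ge0. Qed.

Lemma rate_self s : rate s s = 0.
Proof.
rewrite rateE (Rsum_ext (g := fun _ => 0)) ?Rsum0 // => xy.
case: ifP => // _; rewrite (Rsum_ext (g := fun _ => 0)) ?Rsum0 // => j.
by rewrite eq_upd_self eq_sym andNb.
Qed.

Definition exit_rate c : R := Rsum (fun r => if r == c then 0 else rate c r).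

Lemma genE r c : gen r c = (if r == c then - exit_rate c else 0) + rate r c.
Proof.
rewrite /gen /exit_rate; case: eqP => [->|_]; last by rewrite Rplus_0_l.
by rewrite rate_self Rplus_0_r.
Qed.

Lemma exit_rateE c : exit_rate c =
  Rsum (fun xy : vertex * vertex => if adj xy.1 xy.2 then
     Rsum (fun j => if c (xy.1, j) != c (xy.2, j) then copy_rate c xy.1 xy.2 else 0) else 0).
Proof.
rewrite /exit_rate (Rsum_ext (g := rate c)); last first.
  by move=> r; case: eqP => // ->; rewrite rate_self.
rewrite /rate Rsum_swap; apply: Rsum_ext => xy.
rewrite Rsum_if; case: ifP => // _; rewrite Rsum_swap; apply: Rsum_ext => j.
rewrite -(Rsum_pred1 (fun _ => if c (xy.1, j) != c (xy.2, j) then copy_rate c xy.1 xy.2 else 0)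
                     (upd c xy.1 j (c (xy.2, j)))).
by apply: Rsum_ext => r; case: (_ != _); case: (r == _).
Qed.

Lemma exit_rate_alike c c' : alike c c' -> exit_rate c = exit_rate c'.
Proof.
move=> cc'; rewrite !exit_rateE; apply: Rsum_ext => xy; case: ifP => // xy_adj.
apply: Rsum_ext => j; rewrite (alike_agree j cc' xy_adj).
by rewrite /copy_rate (alike_nagree cc' xy_adj) (alike_ndiff cc' xy_adj).
Qed.

Lemma copy_source_sum c x y j (G : config -> R) : x != y ->
  Rsum (fun r => if (r (x, j) != r (y, j)) && (c == upd r x j (r (y, j))) then G r else 0)
  = Rsum (fun v => if (v != c (y, j)) && (c (x, j) == c (y, j)) then G (upd c x j v) else 0).
Proof.
move=> xy.
have upd_y s v : upd s x j v (y, j) = s (y, j) by rewrite updE eq_sym (negbTE xy).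
pose K v := if (v != c (y, j)) && (c (x, j) == c (y, j)) then G (upd c x j v) else 0.
rewrite (Rsum_ext (g := fun r => Rsum (fun v => if r == upd c x j v then K v else 0))).
  by rewrite Rsum_swap; apply: Rsum_ext => v; exact: (Rsum_pred1 (fun _ => K v)).
move=> r; rewrite (Rsum_D1 _ (r (x, j))).
rewrite (Rsum_ext (f := fun v => if v == r (x, j) then 0 else _) (g := fun _ => 0)); last first.
  move=> v; case: eqP => // rxj_v; case: eqP => // rE.
  by case: rxj_v; rewrite rE upd_at.
rewrite Rsum0 Rplus_0_r /K.
case: (eqVneq r (upd c x j (r (x, j)))) => [rE|rE].
  by move: rE; move: (r (x, j)) => v0 rE; subst r; rewrite !upd_y upd_upd eq_upd_self.
case: ifP => // /andP [_ /eqP cE]; case/eqP: rE.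
by rewrite cE upd_upd upd_id.
Qed.

(* [x] has at most two neighbours, one of which shares its [i]-state, so the edges
   determine the whole equality pattern of the [i]-states on this neighbourhood. *)
Lemma alike_local_relabel c c' x y : alike c c' -> adj x y -> c (x, i) = c (y, i) ->
  exists sg : {perm 'I_q}, forall a, (a == x) || adj x a -> sg (c (a, i)) = c' (a, i).
Proof.
move=> cc' xy cxy.
have c'xy : c' (x, i) = c' (y, i) by apply/eqP; rewrite -(alike_agree i cc' xy) cxy.
have [|sg sgE] := @perm_of_same_pattern _ _ [seq a <- enum vertex | (a == x) || adj x a]
   (fun a => c (a, i)) (fun a => c' (a, i)).
  move=> n m /=; rewrite !mem_filter => /andP [nx _] /andP [mx _].
  case: (eqVneq n m) => [->|nm]; first by rewrite !eqxx.
  case/orP: nx => [/eqP nE|xn]; rewrite ?nE in nm *.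
    by case/orP: mx => [/eqP mE|xm]; [rewrite mE eqxx in nm|exact: (alike_agree i cc' xm)].
  case/orP: mx => [/eqP ->|xm].
    by rewrite eq_sym [in RHS]eq_sym; exact: (alike_agree i cc' xn).
  case/orP: (adj_two_neighbours xn xm xy nm) => /eqP yE; rewrite yE in cxy c'xy.
    by rewrite -cxy -c'xy; exact: (alike_agree i cc' xm).
  by rewrite -cxy -c'xy eq_sym [in RHS]eq_sym; exact: (alike_agree i cc' xn).
by exists sg => a ax; apply: sgE; rewrite mem_filter ax mem_enum.
Qed.

Lemma alike_upd_off c c' x j v : alike c c' -> j != i -> alike (upd c x j v) (upd c' x j v).
Proof.
move=> /alikeP [off on] ji; apply/alikeP; split.
  by move=> a k ki; rewrite !updE; case: ifP => // _; rewrite off.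
by move=> a b ab; rewrite !updE ![i == j]eq_sym (negbTE ji) !andbF; exact: on.
Qed.

Lemma alike_upd_relabel c c' x v (sg : {perm 'I_q}) : alike c c' ->
  (forall a, (a == x) || adj x a -> sg (c (a, i)) = c' (a, i)) ->
  alike (upd c x i v) (upd c' x i (sg v)).
Proof.
move=> cc' sgE; have /alikeP [off on] := cc'; apply/alikeP; split.
  by move=> a k ki; rewrite !updE (negbTE ki) !andbF; exact: off.
move=> a b ab; rewrite !updE !eqxx !andbT.
case: (eqVneq a x) => [ax|ax]; case: (eqVneq b x) => [bx|bx].
- by move: (adj_neq ab); rewrite ax bx eqxx.
- by subst a; rewrite -(sgE b) ?ab ?orbT // (inj_eq perm_inj).
- by subst b; rewrite -(sgE a) ?(adj_sym x a) ?ab ?orbT // (inj_eq perm_inj).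
- exact: on.
Qed.

Lemma rate_in_sum (P : pred config) c :
  Rsum (fun r => if P r then rate r c else 0) =
  Rsum (fun xy : vertex * vertex => if adj xy.1 xy.2 then Rsum (fun j =>
     Rsum (fun r => if (r (xy.1, j) != r (xy.2, j)) && (c == upd r xy.1 j (r (xy.2, j)))
        then (if P r then copy_rate r xy.1 xy.2 else 0) else 0)) else 0).
Proof.
rewrite (Rsum_ext (g := fun r => Rsum (fun xy : vertex * vertex => if adj xy.1 xy.2 then
   Rsum (fun j => if (r (xy.1, j) != r (xy.2, j)) && (c == upd r xy.1 j (r (xy.2, j)))
      then (if P r then copy_rate r xy.1 xy.2 else 0) else 0) else 0))).
  rewrite Rsum_swap; apply: Rsum_ext => xy; rewrite Rsum_if; case: ifP => // _.
  by rewrite Rsum_swap.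
move=> r; case: (P r); first by rewrite rateE.
rewrite (Rsum_ext (g := fun _ => 0)) ?Rsum0 // => xy; case: ifP => // _.
by rewrite (Rsum_ext (g := fun _ => 0)) ?Rsum0 // => j; case: ifP.
Qed.

Lemma rate_lumpable (P : pred config) c c' :
  (forall r r', alike r r' -> P r = P r') -> alike c c' ->
  Rsum (fun r => if P r then rate r c else 0) = Rsum (fun r => if P r then rate r c' else 0).
Proof.
move=> P_alike cc'; rewrite !rate_in_sum; apply: Rsum_ext => [[x y]] /=.
case: ifP => // xy; apply: Rsum_ext => j.
rewrite !(copy_source_sum _ _ (fun r => if P r then copy_rate r x y else 0) (adj_neq xy)).
rewrite -(alike_agree j cc' xy).
case: (boolP (c (x, j) == c (y, j))) => cxy; last first.
  by rewrite !(Rsum_ext (g := fun _ => 0)) ?Rsum0 // => v; rewrite andbF.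
have [sg [sg_y alike_sg]] : exists sg : {perm 'I_q}, sg (c (y, j)) = c' (y, j) /\
     forall v, alike (upd c x j v) (upd c' x j (sg v)).
  case: (eqVneq j i) => [ji|ji].
    subst j; have [sg sgE] := alike_local_relabel cc' xy (eqP cxy).
    exists sg; split; first by apply: sgE; rewrite xy orbT.
    by move=> v; exact: alike_upd_relabel.
  exists 1%g; split; first by rewrite perm1; have /alikeP [off _] := cc'; apply: off.
  by move=> v; rewrite perm1; exact: alike_upd_off.
rewrite [RHS](Rsum_reindex _ (@perm_inj _ sg)); apply: Rsum_ext => v.
rewrite -sg_y (inj_eq perm_inj) !andbT; case: (v != c (y, j)) => //.
have cc'v := alike_sg v.
by rewrite (P_alike _ _ cc'v) /copy_rate (alike_nagree cc'v xy) (alike_ndiff cc'v xy).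
Qed.

Lemma gen_lumpable (P : pred config) c c' :
  (forall r r', alike r r' -> P r = P r') -> alike c c' ->
  Rsum (fun r => if P r then gen r c else 0) = Rsum (fun r => if P r then gen r c' else 0).
Proof.
move=> P_alike cc'.
have split_gen d : Rsum (fun r => if P r then gen r d else 0) =
    (if P d then - exit_rate d else 0) + Rsum (fun r => if P r then rate r d else 0).
  rewrite -(Rsum_pred1 (fun r => if P r then - exit_rate d else 0) d) -Rsum_add.
  by apply: Rsum_ext => r; rewrite genE; case: (P r); case: (r == d); ring.
by rewrite !split_gen (P_alike _ _ cc') (exit_rate_alike cc') (rate_lumpable P_alike cc').
Qed.

End AxelrodGenerator.

Section AxelrodLaw.
Variables (F q N : nat) (p : R -> config F q N -> R).
Hypotheses (hq : (2 <= q)%nat) (hp : is_law p).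

Let p0_gt0 c : 0 < p 0 c.
Proof.
case: hp => -> _; apply/Rinv_0_lt_compat/pow_lt/lt_0_INR.
by move/leP: hq; lia.
Qed.

Lemma law_gt0 t c : 0 <= t -> 0 < p t c.
Proof. exact: (forward_gt0 (@gen_ge0 F q N) (proj2 hp) p0_gt0 (t := t) c). Qed.

Lemma law_alike i t c c' : 0 <= t -> alike i c c' -> p t c = p t c'.
Proof.
apply: (forward_lumped (proj2 hp) (@alike_refl F q N i) (@alike_sym F q N i)
  (@alike_trans F q N i)) => [P c1 c2|c1 c2 _]; first exact: gen_lumpable.
by rewrite !(proj1 hp).
Qed.

End AxelrodLaw.

Section Relabelling.
Variables (F q N : nat) (i : feature F) (x y z : vertex N).
Hypotheses (xy : (x < y)%nat) (yz : (y < z)%nat).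
Local Notation config := (config F q N).
Implicit Types (c : config) (d : 'I_q).

Definition relabel_beyond (d : 'I_q) (c : config) : config :=
  [ffun pr : vertex N * feature F =>
     if (pr.2 == i) && (y < pr.1)%nat then tperm (c (x, i)) d (c pr) else c pr].

Lemma relabel_beyond_x d c k : relabel_beyond d c (x, k) = c (x, k).
Proof. by rewrite ffunE /= ltnNge (ltnW xy) andbF. Qed.

Lemma relabel_beyond_y d c k : relabel_beyond d c (y, k) = c (y, k).
Proof. by rewrite ffunE /= ltnn andbF. Qed.

Lemma relabel_beyond_z d c : relabel_beyond d c (z, i) = tperm (c (x, i)) d (c (z, i)).
Proof. by rewrite ffunE /= eqxx yz. Qed.

Lemma relabel_beyondK d : involutive (relabel_beyond d).
Proof.
move=> c; apply/ffunP => pr; rewrite ffunE relabel_beyond_x ffunE.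
by case: ifP => cond; rewrite cond ?tpermK.
Qed.

Lemma alike_relabel_beyond d c :
  c (y, i) != c (x, i) -> c (y, i) != d -> alike i c (relabel_beyond d c).
Proof.
move=> yx yd; apply/alikeP; split => [a k ki|a b ab]; first by rewrite ffunE /= (negbTE ki).
have y_fixed : tperm (c (x, i)) d (c (y, i)) = c (y, i) by apply: tpermD; rewrite eq_sym.
have cross a' b' : adj a' b' -> (y < a')%nat -> ~~ (y < b')%nat -> b' = y.
  by rewrite -leqNgt /adj => /orP [] /eqP ? /ltP ? /leP ?; apply: val_inj => /=; lia.
rewrite !ffunE /= eqxx /=.
case: (boolP (y < a)%nat) => ya; case: (boolP (y < b)%nat) => yb //.
- by rewrite (inj_eq perm_inj).
- by rewrite (cross _ _ ab ya yb) -[in RHS]y_fixed (inj_eq perm_inj).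
- by rewrite adj_sym in ab; rewrite (cross _ _ ab yb ya) -[in RHS]y_fixed (inj_eq perm_inj).
Qed.

End Relabelling.

Section Conditioning.
Variables (F q N : nat) (i : feature F) (x y z : vertex N) (p : R -> config F q N -> R).
Hypotheses (hq : (2 <= q)%nat) (hp : is_law p) (xy : (x < y)%nat) (yz : (y < z)%nat).
Local Notation config := (config F q N).
Implicit Types (c : config) (d : 'I_q).

Let distinct3 : pred config := predC (predU (Omega i x y) (Omega i y z)).

Lemma prob_distinct3 t : 0 <= t ->
  prob p t distinct3 = (INR q - 1) * prob p t (predI (Omega i x z) distinct3).
Proof.
move=> t_ge0; rewrite /prob.
rewrite (Rsum_ext (g := fun c => Rsum (fun d : 'I_q =>
   if d == c (z, i) then (if distinct3 c then p t c else 0) else 0))); last first.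
  by move=> c; rewrite (Rsum_pred1 (fun _ => if distinct3 c then p t c else 0)).
rewrite Rsum_swap (Rsum_ext (g := fun d => Rsum (fun c =>
   if predI (Omega i x z) distinct3 c && (c (y, i) != d) then p t c else 0))); last first.
  move=> d; rewrite (Rsum_reindex _ (can_inj (relabel_beyondK i xy d))).
  apply: Rsum_ext => c; rewrite /distinct3 /Omega /= relabel_beyond_z // !relabel_beyond_x //.
  rewrite !relabel_beyond_y.
  case: (eqVneq (c (z, i)) (c (x, i))) => [zx|zx]; last first.
    by rewrite -{1}(tpermL (c (x, i)) d) (inj_eq perm_inj) eq_sym (negbTE zx).
  rewrite zx tpermL eqxx [c (y, i) == c (x, i)]eq_sym orbb negb_or.
  case: (eqVneq (c (x, i)) (c (y, i))) => //= xy_neq.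
  case: (eqVneq (c (y, i)) d) => //= yd.
  by apply/esym/(law_alike hp t_ge0)/alike_relabel_beyond; rewrite // eq_sym.
rewrite Rsum_swap -Rsum_scal; apply: Rsum_ext => c.
case: (predI _ _ c) => /=; last by rewrite Rsum0; ring.
rewrite (Rsum_ext (g := fun d => p t c - (if d == c (y, i) then p t c else 0))); last first.
  by move=> d; rewrite eq_sym; case: (d == c (y, i)) => /=; ring.
by rewrite Rsum_sub Rsum_const card_ord (Rsum_pred1 (fun _ => p t c)); ring.
Qed.

Lemma prob_distinct3_gt0 t : 0 <= t -> 0 < prob p t distinct3.
Proof.
move=> t_ge0.
pose c0 : config := [ffun pr : vertex N * feature F =>
  if pr.1 == y then Ordinal hq else Ordinal (ltnW hq)].
have c0_distinct : distinct3 c0.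
  have [xy_neq zy_neq] : (x == y) = false /\ (z == y) = false.
    by rewrite -!val_eqE ltn_eqF // gtn_eqF.
  by rewrite /distinct3 /Omega /= !ffunE /= eqxx xy_neq zy_neq.
apply: Rlt_le_trans (Rsum_term_le (f := fun c => if distinct3 c then p t c else 0) c0 _).
  by rewrite c0_distinct; exact: law_gt0.
by move=> c; case: ifP => _; [apply/Rlt_le/law_gt0|apply: Rle_refl].
Qed.

End Conditioning.

Close Scope R_scope.

Theorem lemma9 (F q N : nat) (hq : (2 <= q)%N)
    (p : R -> config F q N -> R) (hp : is_law p)
    (t : R) (ht : (0 <= t)%R)
    (x y z : 'I_N.+1) (hxy : (x < y)%N) (hyz : (y < z)%N) (i : 'I_F) :
  cond_prob p t (Omega i x z)
    (predC (predU (Omega i x y) (Omega i y z))) = (/ (INR q - 1))%R.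
Proof.
have q_gt1 : (1 < INR q)%R by apply: (lt_INR 1); apply/leP.
have distinct3_gt0 := prob_distinct3_gt0 i hq hp hxy hyz ht.
rewrite /cond_prob (prob_distinct3 i hp hxy hyz ht) in distinct3_gt0 *.
field; split; [lra|by move=> E; rewrite E Rmult_0_r in distinct3_gt0; lra].
Qed.
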